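(* Let $\pi(\vec{x},y)$ be a Skolem constraint (a finite conjunction of linear arithmetic literals, as defined in the context) and let $\mathit{sk}(\vec{x})$ be the term returned by the procedure $\textsc{ExtractSk}(\vec{x},y,\pi)$ described in the context. Assume that the uninterpreted function $f_{\textsc{rng}}$ occurring in $\mathit{sk}$ is interpreted so that postconditions (P1)–(P5) of the context hold. Then $\mathit{sk}$ is a valid Skolem term for $\pi$: for every valuation of $\vec{x}$ such that $\exists y.\,\pi(\vec{x},y)$ holds, $\pi(\vec{x},\mathit{sk}(\vec{x}))$ holds.
   Context: Work in linear integer arithmetic or linear real arithmetic, with universally quantified variables $\vec{x}$ and a single existentially quantified variable $y$ of sort $T\in\{\mathbb{Z},\mathbb{R}\}$. A Skolem constraint is a conjunction $\pi(\vec{x},y)=\bigwedge_{r\in E\cup D\cup G\cup GE\cup L\cup LE} r(\vec{x},y)$ of literals, each normalized to one of the forms $E=\{y=f_i(\vec{x})\}$, $D=\{y\neq f_i(\vec{x})\}$, $G=\{y>f_i(\vec{x})\}$, $GE=\{y\ge f_i(\vec{x})\}$, $L=\{y<f_i(\vec{x})\}$, $LE=\{y\le f_i(\vec{x})\}$ with $f_i$ linear terms over $\vec{x}$ (over the integers, $A<B$ is rewritten as $A\le B-1$ and $A\ge B$ as $A>B-1$). A term $\mathit{sk}(\vec{x})$ is a valid Skolem term for $\pi$ if $\pi(\vec{x},\mathit{sk}(\vec{x}))$ holds for every $\vec{x}$ with $\exists y.\pi(\vec{x},y)$. Helpers: $\textsc{ASN}(y\sim e(\vec{x}))=e$; $\textsc{MIN}(\{s\})=\textsc{MAX}(\{s\})=\textsc{ASN}(s)$;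 $\textsc{MIN}(S)=\mathit{ite}(\textsc{ASN}(s)\le \textsc{MIN}(S\setminus\{s\}),\textsc{ASN}(s),\textsc{MIN}(S\setminus\{s\}))$ and $\textsc{MAX}(S)=\mathit{ite}(\textsc{ASN}(s)\ge \textsc{MAX}(S\setminus\{s\}),\textsc{ASN}(s),\textsc{MAX}(S\setminus\{s\}))$ for $s\in S$ (symbolic min/max). Uninterpreted random number generator: $f_{\textsc{rng}}(H,\ell_c,u_c,\ell,u)$ takes a collection $H$ of terms, two booleans $\ell_c,u_c$ and two bounds, returning a value of sort $T$; its interpretation must satisfy: (P1) $f_{\textsc{rng}}(H,\cdot)\neq h$ for all $h\in H$; (P2) $f_{\textsc{rng}}(H,\bot,\bot,\ell,u)\in(\ell,u)$; (P3) $f_{\textsc{rng}}(H,\bot,\top,\ell,u)\in(\ell,u]$; (P4) $f_{\textsc{rng}}(H,\top,\bot,\ell,u)\in[\ell,u)$; (P5) $f_{\textsc{rng}}(H,\top,\top,\ell,u)\in[\ell,u]$. Here $-\infty,+\infty$ denote unconstrained bounds. Procedure $\textsc{ExtractSk}(\vec{x},y,\pi)$: set $\ell_{closed}=u_{closed}=\bot$ and $\ell,u$ undefined. If $E\neq\varnothing$, return $\textsc{ASN}(e)$ for some $e\in E$. If $G\cup GE\neq\varnothing$: $\ell:=\textsc{MAX}(G\cup GE)$, $\ell_{closed}:=(G=\varnothing\lor \textsc{MAX}(G)<\textsc{MAX}(GE))$. If $L\cup LE\neq\varnothing$: $u:=\textsc{MIN}(L\cup LE)$, $u_{closed}:=(L=\varnothing\lor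 \textsc{MIN}(L)>\textsc{MIN}(LE))$. If $\ell(\vec{x})=u(\vec{x})$, return $\ell$. Let $H=\{\textsc{ASN}(d)\mid d\in D\}$. If both $\ell,u$ undefined return $f_{\textsc{rng}}(H,\top,\top,-\infty,+\infty)$; if only $\ell$ undefined return $f_{\textsc{rng}}(H,\top,u_{closed},-\infty,u)$; if only $u$ undefined return $f_{\textsc{rng}}(H,\ell_{closed},\top,\ell,+\infty)$; otherwise return $f_{\textsc{rng}}(H,\ell_{closed},u_{closed},\ell,u)$. *)

From HB Require Import structures.
From mathcomp Require Import all_boot all_order all_algebra.
From mathcomp Require Import reals.

Set Implicit Arguments.
Unset Strict Implicit.
Unset Printing Implicit Defensive.

Import Order.TTheory GRing.Theory Num.Theory.
Local Open Scope ring_scope.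

Section Skolem.
Context (T : realDomainType) (n : nat).

Definition valuation := 'I_n -> T.

Record lterm := LTerm { lt_coef : 'I_n -> T; lt_const : T }.

Definition lt_eval (f : lterm) (x : valuation) : T :=
  lt_const f + \sum_(i < n) lt_coef f i * x i.

Definition lterm0 : lterm := LTerm (fun _ => 0) 0.

Inductive rel_kind := REq | RNeq | RGt | RGe | RLt | RLe.

Record literal := Lit { lit_kind : rel_kind; lit_term : lterm }.

Definition lit_holds (r : literal) (x : valuation) (y : T) : bool :=
  let v := lt_eval (lit_term r) x in
  match lit_kind r with
  | REq => y == v
  | RNeq => y != v
  | RGt => v < y
  | RGe => v <= y
  | RLt => y < v
  | RLe => y <= v
  end.

Definition skolem_constraint := seq literal.

Definition holds (pi : skolem_constraint) (x : valuation) (y : T) : bool :=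
  all (fun r => lit_holds r x y) pi.

Definition kind_eqb (k1 k2 : rel_kind) : bool :=
  match k1, k2 with
  | REq, REq | RNeq, RNeq | RGt, RGt | RGe, RGe | RLt, RLt | RLe, RLe => true
  | _, _ => false
  end.

Definition lits_of (k : rel_kind) (pi : skolem_constraint) : seq lterm :=
  [seq lit_term r | r <- pi & kind_eqb (lit_kind r) k].

(* Symbolic MAX / MIN as in the paper (ite chains), evaluated at x;
   None stands for the (undefined) MAX/MIN of the empty set. *)
Fixpoint MAXv (S : seq lterm) (x : valuation) : option T :=
  match S with
  | [::] => None
  | s :: S' =>
      match MAXv S' x with
      | None => Some (lt_eval s x)
      | Some m => Some (if lt_eval s x >= m then lt_eval s x else m)
      end
  end.

Fixpoint MINv (S : seq lterm) (x : valuation) : option T :=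
  match S with
  | [::] => None
  | s :: S' =>
      match MINv S' x with
      | None => Some (lt_eval s x)
      | Some m => Some (if lt_eval s x <= m then lt_eval s x else m)
      end
  end.

(* Interpretation of f_rng: f_rng(H, l_c, u_c, l, u), bound None = -oo / +oo. *)
Definition rng_fun := seq T -> bool -> bool -> option T -> option T -> T.

Definition in_interval (lc uc : bool) (l u : option T) (v : T) : bool :=
  (match l with None => true | Some a => if lc then a <= v else a < v end) &&
  (match u with None => true | Some b => if uc then v <= b else v < b end).

(* Postconditions (P1)-(P5): whenever the requested value exists (some
   value of sort T avoids H and lies in the requested interval), f_rng
   returns such a value. *)
Definition rng_spec (rng : rng_fun) : Prop :=
  forall (H : seq T) (lc uc : bool) (l u : option T),
    (exists v : T, v \notin H /\ in_interval lc uc l u v) ->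
    rng H lc uc l u \notin H /\ in_interval lc uc l u (rng H lc uc l u).

(* The procedure ExtractSk, with the term it returns evaluated at x.
   [k] selects "some e in E" (the k-th equality literal). *)
Definition ExtractSk (rng : rng_fun) (k : nat) (pi : skolem_constraint)
    (x : valuation) : T :=
  let E := lits_of REq pi in
  let D := lits_of RNeq pi in
  let G := lits_of RGt pi in
  let GE := lits_of RGe pi in
  let L := lits_of RLt pi in
  let LE := lits_of RLe pi in
  if size E != 0%N then lt_eval (nth lterm0 E k) x else
  let l := MAXv (G ++ GE) x in
  let lc := (size G == 0%N) ||
            (match MAXv G x, MAXv GE x with
             | Some a, Some b => a < b | _, _ => false end) in
  let u := MINv (L ++ LE) x in
  let uc := (size L == 0%N) ||
            (match MINv L x, MINv LE x with
             | Some a, Some b => a > b | _, _ => false end) in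
  let H := [seq lt_eval d x | d <- D] in
  match l, u with
  | Some lv, Some uv => if lv == uv then lv else rng H lc uc l u
  | None, None => rng H true true None None
  | None, Some _ => rng H true uc None u
  | Some _, None => rng H lc true l None
  end.

Definition valid_skolem (pi : skolem_constraint) (sk : valuation -> T) : Prop :=
  forall x : valuation, (exists y : T, holds pi x y) -> holds pi x (sk x).

End Skolem.

Arguments LTerm {T n}.
Arguments Lit {T n}.

Definition ExtractSk_sound (T : realDomainType) : Prop :=
  forall (n : nat) (pi : skolem_constraint T n) (rng : rng_fun T) (k : nat),
    rng_spec rng ->
    (0 < size (lits_of REq pi) -> k < size (lits_of REq pi))%N ->
    valid_skolem pi (ExtractSk rng k pi).

From mathcomp Require Import all_boot all_order all_algebra.
From mathcomp Require Import reals.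

(* Without equality literals, the solutions of pi at x form an interval minus
   the finite set H of excluded values: the end points of the interval are
   MAX(G ++ GE) and MIN(L ++ LE), and the flags l_closed, u_closed record
   whether the extremal bound is attained by non-strict literals only.
   A degenerate interval [l, l] leaves l as the only candidate; otherwise
   (P1)-(P5) make f_rng return a solution as soon as one exists.  With
   equality literals, every solution equals each of their terms. *)

Set Implicit Arguments.
Unset Strict Implicit.
Unset Printing Implicit Defensive.
Import Order.TTheory GRing.Theory Num.Theory.
Local Open Scope ring_scope.

Section ExtractSkSoundness.
Context (T : realDomainType) (n : nat).
Implicit Types (x : valuation T n) (S G GE L LE : seq (lterm T n)).
Implicit Types (pi : skolem_constraint T n) (C : bool) (v : T).

Lemma holds_lits_of pi x v : holds pi x v =
  [&& all (fun f => v == lt_eval f x) (lits_of REq pi),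
      all (fun f => v != lt_eval f x) (lits_of RNeq pi),
      all (fun f => lt_eval f x < v) (lits_of RGt pi),
      all (fun f => lt_eval f x <= v) (lits_of RGe pi),
      all (fun f => v < lt_eval f x) (lits_of RLt pi) &
      all (fun f => v <= lt_eval f x) (lits_of RLe pi)].
Proof.
elim: pi => [|[k t] pi IH] //=.
rewrite /holds /= in IH *; rewrite IH /lits_of /lit_holds /=.
by case: k => /=; bool_congr.
Qed.

Lemma notin_map_lt_eval S x v :
  (v \notin [seq lt_eval f x | f <- S]) = all (fun f => v != lt_eval f x) S.
Proof. by elim: S => //= f S IH; rewrite in_cons negb_or IH. Qed.

Definition above C (l : option T) v := if l is Some a then a < v ?<= if C else true.
Definition below C (u : option T) v := if u is Some b then v < b ?<= if C else true.

Lemma in_intervalE lc uc l u v :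
  in_interval lc uc l u v = above lc l v && below uc u v.
Proof. by []. Qed.

Lemma MAXv_above C S x v :
  above C (MAXv S x) v = all (fun f => lt_eval f x < v ?<= if C) S.
Proof.
elim: S => //= f S <-.
by case: (MAXv S x) => [m|] /=; rewrite ?andbT // -maxEle lteif_maxl andbC.
Qed.

Lemma MINv_below C S x v :
  below C (MINv S x) v = all (fun f => v < lt_eval f x ?<= if C) S.
Proof.
elim: S => //= f S <-.
by case: (MINv S x) => [m|] /=; rewrite ?andbT // -minEle lteif_minr.
Qed.

Lemma MAXv_None S x : MAXv S x = None -> S = [::].
Proof. by case: S => //= f S; case: (MAXv S x). Qed.

Lemma MINv_None S x : MINv S x = None -> S = [::].
Proof. by case: S => //= f S; case: (MINv S x). Qed.

Definition lower_closed G GE x :=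
  (size G == 0%N) ||
  (match MAXv G x, MAXv GE x with Some a, Some b => a < b | _, _ => false end).

Definition upper_closed L LE x :=
  (size L == 0%N) ||
  (match MINv L x, MINv LE x with Some a, Some b => a > b | _, _ => false end).

Lemma above_MAXv_cat G GE x v :
  above (lower_closed G GE x) (MAXv (G ++ GE) x) v =
  above false (MAXv G x) v && above true (MAXv GE x) v.
Proof.
rewrite MAXv_above all_cat -!MAXv_above /lower_closed.
case EG: (MAXv G x) => [a|]; last by rewrite (MAXv_None EG).
have -> /= : (size G == 0%N) = false by case: G EG.
case: (MAXv GE x) => [b|] /=; last by rewrite !andbT.
case: ltP => [ab|ba]; rewrite ?lteifT ?lteifF; apply/andP/andP => -[av bv].
- by split=> //; apply: lt_le_trans ab bv.
- by split=> //; apply: ltW.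
- by split=> //; apply: ltW.
- by split=> //; apply: le_lt_trans ba av.
Qed.

Lemma below_MINv_cat L LE x v :
  below (upper_closed L LE x) (MINv (L ++ LE) x) v =
  below false (MINv L x) v && below true (MINv LE x) v.
Proof.
rewrite MINv_below all_cat -!MINv_below /upper_closed.
case EL: (MINv L x) => [a|]; last by rewrite (MINv_None EL).
have -> /= : (size L == 0%N) = false by case: L EL.
case: (MINv LE x) => [b|] /=; last by rewrite !andbT.
case: ltP => [ba|ab]; rewrite ?lteifT ?lteifF; apply/andP/andP => -[va vb].
- by split=> //; apply: le_lt_trans vb ba.
- by split=> //; apply: ltW.
- by split=> //; apply: ltW.
- by split=> //; apply: lt_le_trans va ab.
Qed.

Lemma holds_in_interval pi x v : lits_of REq pi = [::] ->
  holds pi x v =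
  (v \notin [seq lt_eval f x | f <- lits_of RNeq pi]) &&
  in_interval (lower_closed (lits_of RGt pi) (lits_of RGe pi) x)
              (upper_closed (lits_of RLt pi) (lits_of RLe pi) x)
              (MAXv (lits_of RGt pi ++ lits_of RGe pi) x)
              (MINv (lits_of RLt pi ++ lits_of RLe pi) x) v.
Proof.
move=> E0; rewrite holds_lits_of E0 in_intervalE above_MAXv_cat below_MINv_cat.
by rewrite !MAXv_above !MINv_below notin_map_lt_eval /= !andbA.
Qed.

Lemma rng_spec_sat (rng : rng_fun T) (P : T -> bool) H lc uc l u :
  rng_spec rng -> (forall v, P v = (v \notin H) && in_interval lc uc l u v) ->
  (exists v, P v) -> P (rng H lc uc l u).
Proof.
move=> rngP PE [v Pv]; rewrite PE; apply/andP/rngP.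
by exists v; apply/andP; rewrite -PE.
Qed.

Lemma ExtractSk_valid (rng : rng_fun T) k pi : rng_spec rng ->
  (0 < size (lits_of REq pi) -> k < size (lits_of REq pi))%N ->
  valid_skolem pi (ExtractSk rng k pi).
Proof.
move=> rngP kE x [y piy]; rewrite /ExtractSk.
case: ifP => [E_ne | /negbFE/eqP/size0nil E0].
  move: (piy); rewrite holds_lits_of => /andP[/(all_nthP (lterm0 T n)) yE _].
  have k_lt : (k < size (lits_of REq pi))%N by apply: kE; rewrite lt0n.
  by rewrite -(eqP (yE k k_lt)).
have piE v := holds_in_interval x v E0.
case El: (MAXv _ x) => [lv|]; case Eu: (MINv _ x) => [uv|];
  first case: (eqVneq lv uv) => [lv_uv | _].
  move: (piy); rewrite piE El Eu -lv_uv in_intervalE.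
  move=> /and3P[_ /lteifW lv_y /lteifW y_lv].
  by have <- : y = lv by apply/le_anti; rewrite lv_y y_lv.
all: by apply: rng_spec_sat rngP _ (ex_intro _ y piy) => v; rewrite piE El Eu.
Qed.

End ExtractSkSoundness.

Theorem mainTheorem1 :
  ExtractSk_sound int /\ (forall R : realType, ExtractSk_sound R).
Proof. by split=> [|R] n pi rng k; apply: ExtractSk_valid. Qed.
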